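(* Let $\mathfrak{S}=(\mathcal{X},\mathsf{S},\gamma,(\Lambda_{a})_{a\in\mathcal{A}})$ be a spectral decomposition system for the Euclidean space $\mathfrak{H}$ and let $D$ be a nonempty $\mathsf{S}$-invariant subset of $\mathcal{X}$. Then: (i) $\operatorname{conv}\gamma^{-1}(D)=\gamma^{-1}(\operatorname{conv}D)$; (ii) if $D$ is convex, then $\operatorname{ext}\gamma^{-1}(D)=\gamma^{-1}(\operatorname{ext}D)$.
   Context: A Euclidean space is a finite-dimensional real inner product space; inner products are written $\langle\cdot,\cdot\rangle$ and norms $\|\cdot\|$. Let $\mathfrak{H}$ and $\mathcal{X}$ be Euclidean spaces, let $\mathsf{S}$ be a group acting on $\mathcal{X}$ by linear isometries, let $\gamma\colon\mathfrak{H}\to\mathcal{X}$, and let $(\Lambda_a)_{a\in\mathcal{A}}$ be a family of linear operators from $\mathcal{X}$ to $\mathfrak{H}$. The orbit of $x$ is $\mathsf{S}\cdot x=\{s\cdot x: s\in\mathsf{S}\}$; a map $f$ on $\mathcal{X}$ is $\mathsf{S}$-invariant if $f(s\cdot x)=f(x)$ for all $s,x$; a subset $D$ of $\mathcal{X}$ is $\mathsf{S}$-invariant if $s\cdot x\in D$ whenever $x\in D$, $s\in\mathsf{S}$. The tuple is a spectral decomposition system for $\mathfrak{H}$ if: [A] every $\Lambda_a$ is an isometry; [B] there exists an $\mathsf{S}$-invariant $\tau\colon\mathcal{X}\to\mathcal{X}$ with $\tau(x)\in\mathsf{S}\cdot x$ for all $x$ and $\gamma\circ\Lambda_a=\tau$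 for all $a$; [C] for every $X\in\mathfrak{H}$ there is $a$ with $X=\Lambda_a\gamma(X)$; [D] $\langle X,Y\rangle\leq\langle\gamma(X),\gamma(Y)\rangle$ for all $X,Y\in\mathfrak{H}$. $\operatorname{conv}C$ is the convex hull of $C$; for convex $C$, $\operatorname{ext}C$ is its set of extreme points. *)

From HB Require Import structures.
From mathcomp Require Import all_boot all_order all_algebra.
From mathcomp Require Import classical_sets reals.
Set Implicit Arguments. Unset Strict Implicit. Unset Printing Implicit Defensive.
Import Order.TTheory GRing.Theory Num.Theory.
Local Open Scope ring_scope.
Local Open Scope classical_set_scope.

Section Defs.
Variable R : realType.

Definition is_inner_product (V : lmodType R) (ip : V -> V -> R) : Prop :=
  [/\ (forall x y, ip x y = ip y x),
      (forall (a : R) x y z, ip (a *: x + y) z = a * ip x z + ip y z),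
      (forall x, 0 <= ip x x) &
      (forall x, ip x x = 0 -> x = 0)].

Definition ipnorm (V : lmodType R) (ip : V -> V -> R) (x : V) : R :=
  Num.sqrt (ip x x).

Definition is_isometry (U V : lmodType R) (ipU : U -> U -> R) (ipV : V -> V -> R)
  (f : U -> V) : Prop := forall x, ipnorm ipV (f x) = ipnorm ipU x.

Definition is_group (G : Type) (mul : G -> G -> G) (one : G) (inv : G -> G) : Prop :=
  [/\ (forall a b c, mul a (mul b c) = mul (mul a b) c),
      (forall a, mul one a = a),
      (forall a, mul a one = a),
      (forall a, mul (inv a) a = one) &
      (forall a, mul a (inv a) = one)].

Definition is_isometric_action (G : Type) (mul : G -> G -> G) (one : G)
  (X : lmodType R) (ipX : X -> X -> R) (act : G -> X -> X) : Prop :=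
  [/\ (forall x, act one x = x),
      (forall s t x, act (mul s t) x = act s (act t x)),
      (forall s, linear (act s)) &
      (forall s, is_isometry ipX ipX (act s))].

Definition spectral_decomposition_system (H X : lmodType R)
  (ipH : H -> H -> R) (ipX : X -> X -> R)
  (G : Type) (act : G -> X -> X) (gamma : H -> X)
  (A : Type) (Lam : A -> X -> H) : Prop :=
  [/\ (* [A] *) (forall a, is_isometry ipX ipH (Lam a)),
      (* [B] *) (exists tau : X -> X,
                  [/\ (forall s x, tau (act s x) = tau x),
                      (forall x, exists s, tau x = act s x) &
                      (forall a x, gamma (Lam a x) = tau x)]),
      (* [C] *) (forall Y : H, exists a, Y = Lam a (gamma Y)) &
      (* [D] *) (forall Y Z : H, ipH Y Z <= ipX (gamma Y) (gamma Z))].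

Definition invariant_set (G : Type) (X : Type) (act : G -> X -> X) (D : set X) : Prop :=
  forall s x, D x -> D (act s x).

Definition conv (V : lmodType R) (C : set V) : set V :=
  [set v | exists n (l : 'I_n -> R) (x : 'I_n -> V),
     [/\ (forall i, C (x i)), (forall i, 0 <= l i), \sum_(i < n) l i = 1 &
         v = \sum_(i < n) l i *: x i]].

Definition convex_set (V : lmodType R) (C : set V) : Prop :=
  forall x y (t : R), C x -> C y -> 0 <= t -> t <= 1 -> C (t *: x + (1 - t) *: y).

Definition ext (V : lmodType R) (C : set V) : set V :=
  [set x | C x /\ forall y z (t : R), C y -> C z -> 0 < t -> t < 1 ->
             x = t *: y + (1 - t) *: z -> y = x /\ z = x].

End Defs.

From HB Require Import structures.
From mathcomp Require Import all_boot all_order all_algebra.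
From mathcomp Require Import classical_sets reals.
From mathcomp Require Import boolp topology normedtype derive.
From mathcomp Require Import ring lra.
Import Order.TTheory GRing.Theory Num.Theory.
Local Open Scope ring_scope.
Local Open Scope classical_set_scope.
Set Implicit Arguments. Unset Strict Implicit. Unset Printing Implicit Defensive.

(* Everything rests on one fact: if <y, w> <= <c, tau w> for every w, then y is a
   convex combination of points of the orbit of c.  The orbit contains the set
   K_c of all z with |z| = |c| and <z, w> <= <tau c, tau w> for every w, which is
   compact and supports y in every direction.  By Caratheodory the combinations
   of dim X + 1 points of K_c form a compact set closed under moving towards K_c,
   so the point of it nearest to y is y itself.  Applied to c = sum l_i gamma(Y_i)
   this gives conv gamma^-1(D) <= gamma^-1(conv D); the converse inclusion and the
   easy half of (ii) transport combinations back to H through Z = Lam_a gamma(Z).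
   For the hard half of (ii), an extreme gamma(Z) equals some point of K_c, so
   |gamma Z| = |c| and then c = gamma(Z); extremality in D gives gamma(Y) =
   gamma(W) = gamma(Z), and the equality cases of [D] force Y = W = Z. *)

Section InnerProduct.
Variables (R : realType) (V : lmodType R) (ip : V -> V -> R).
Hypothesis hip : is_inner_product ip.

Lemma ipC x y : ip x y = ip y x. Proof. by case: hip. Qed.

Lemma ipDl x y z : ip (x + y) z = ip x z + ip y z.
Proof. by case: hip => _ /(_ 1 x y z); rewrite scale1r mul1r. Qed.

Lemma ip0l z : ip 0 z = 0.
Proof. by apply: (addrI (ip 0 z)); rewrite -ipDl !addr0. Qed.

Lemma ipZl a x z : ip (a *: x) z = a * ip x z.
Proof. by case: hip => _ /(_ a x 0 z); rewrite !addr0 ip0l addr0. Qed.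

Lemma ipBl x y z : ip (x - y) z = ip x z - ip y z.
Proof. by rewrite ipDl -scaleN1r ipZl mulN1r. Qed.

Lemma ipZr a x z : ip z (a *: x) = a * ip z x.
Proof. by rewrite ipC ipZl ipC. Qed.

Lemma ipBr x y z : ip z (x - y) = ip z x - ip z y.
Proof. by rewrite ipC ipBl !(ipC z). Qed.

Lemma ip_suml (I : Type) (r : seq I) (P : pred I) (f : I -> V) z :
  ip (\sum_(i <- r | P i) f i) z = \sum_(i <- r | P i) ip (f i) z.
Proof. exact: (big_morph (ip^~ z) (fun x y => ipDl x y z) (ip0l z)). Qed.

Lemma ip_sumr (I : Type) (r : seq I) (P : pred I) (f : I -> V) z :
  ip z (\sum_(i <- r | P i) f i) = \sum_(i <- r | P i) ip z (f i).
Proof. by rewrite ipC ip_suml; apply: eq_bigr => i _; apply: ipC. Qed.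

Lemma ip_ge0 x : 0 <= ip x x. Proof. by case: hip. Qed.

Lemma ip_eq0 x : ip x x = 0 -> x = 0. Proof. by case: hip => _ _ _; apply. Qed.

Lemma ip_subsq x y : ip (x - y) (x - y) = ip x x - 2 * ip x y + ip y y.
Proof. by rewrite ipBl !ipBr (ipC y x); ring. Qed.

Lemma ip_subsq_le0 x y : ip x x - 2 * ip x y + ip y y <= 0 -> x = y.
Proof.
rewrite -ip_subsq => le0; apply/eqP; rewrite -subr_eq0; apply/eqP/ip_eq0.
by apply/eqP; rewrite eq_le le0 ip_ge0.
Qed.

End InnerProduct.

Section LinearFunction.
Variables (R : realType) (U V : lmodType R) (f : U -> V).
Hypothesis hf : linear f.

Let lf : {linear U -> V} := HB.pack f (GRing.isLinear.Build _ _ _ _ f hf).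

Lemma lin_sum (I : Type) (r : seq I) (P : pred I) (g : I -> U) :
  f (\sum_(i <- r | P i) g i) = \sum_(i <- r | P i) f (g i).
Proof. exact: (linear_sum lf). Qed.

Lemma linD x y : f (x + y) = f x + f y. Proof. exact: (linearD lf). Qed.
Lemma linZ a x : f (a *: x) = a *: f x. Proof. exact: (linearZ_LR lf). Qed.
Lemma linB x y : f (x - y) = f x - f y. Proof. exact: (linearB lf). Qed.

End LinearFunction.

Section Isometry.
Variables (R : realType) (U V : lmodType R) (ipU : U -> U -> R) (ipV : V -> V -> R).
Hypotheses (hU : is_inner_product ipU) (hV : is_inner_product ipV).
Variable f : U -> V.
Hypotheses (hf : linear f) (hiso : is_isometry ipU ipV f).

Lemma isometry_ipsq x : ipV (f x) (f x) = ipU x x.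
Proof.
have := congr1 (fun t => t ^+ 2) (hiso x).
by rewrite /ipnorm !sqr_sqrtr ?ip_ge0.
Qed.

Lemma isometry_ip x y : ipV (f x) (f y) = ipU x y.
Proof.
have := isometry_ipsq (x - y).
by rewrite linB // !ip_subsq // !isometry_ipsq; lra.
Qed.

Lemma isometry_inj : injective f.
Proof.
move=> x y fxy; apply: (ip_subsq_le0 hU).
by rewrite -ip_subsq // -isometry_ipsq linB // fxy subrr ip0l.
Qed.

End Isometry.

Section ConvexCombination.
Variables (R : realType) (V : lmodType R).
Implicit Types (C : set V).

Lemma conv_fin C (I : finType) (l : I -> R) (x : I -> V) :
  (forall i, C (x i)) -> (forall i, 0 <= l i) -> \sum_i l i = 1 ->
  conv C (\sum_i l i *: x i).
Proof.
move=> Cx l0 l1.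
have reindex_enum (W : zmodType) (F : I -> W) :
    \sum_i F i = \sum_(j < #|I|) F (enum_val j).
  by apply/reindex/onW_bij/enum_val_bij.
exists #|I|, (l \o enum_val), (x \o enum_val).
by split=> //=; rewrite -?l1 reindex_enum.
Qed.

Lemma conv_convex C : convex_set (conv C).
Proof.
move=> _ _ t [n1 [a [u [Cu a0 a1 ->]]]] [n2 [b [v [Cv b0 b1 ->]]]] t0 t1.
pose l (k : 'I_n1 + 'I_n2) :=
  match k with inl i => t * a i | inr j => (1 - t) * b j end.
pose x (k : 'I_n1 + 'I_n2) := match k with inl i => u i | inr j => v j end.
have -> : t *: \sum_i a i *: u i + (1 - t) *: \sum_j b j *: v j = \sum_k l k *: x k.
  rewrite big_sumType !scaler_sumr.
  by congr (_ + _); apply: eq_bigr => i _; rewrite scalerA.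
apply: conv_fin => [[i|j]|[i|j]|] //=; rewrite ?mulr_ge0 ?subr_ge0 //.
by rewrite big_sumType -!mulr_sumr a1 b1 /=; ring.
Qed.

Lemma convex_weight_le1 n (l : 'I_n -> R) i :
  (forall i, 0 <= l i) -> \sum_i l i = 1 -> l i <= 1.
Proof.
move=> l0 <-; rewrite (bigD1 i) //= lerDl.
by apply: sumr_ge0 => j _.
Qed.

Lemma convex_comb_max n (l : 'I_n.+1 -> R) (x : 'I_n.+1 -> V) :
  (forall i, 0 <= l i) -> \sum_i l i = 1 -> l ord_max = 1 ->
  \sum_i l i *: x i = x ord_max.
Proof.
move=> l0; rewrite big_ord_recr /= => + lm1; rewrite lm1 -[X in _ = X]add0r.
move/addIr/eqP; rewrite psumr_eq0 => [/allP l_eq0|i _]; last exact: l0.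
rewrite big_ord_recr /= lm1 scale1r big1 ?add0r // => i _.
by rewrite (eqP (l_eq0 _ (mem_index_enum _))) scale0r.
Qed.

Lemma convex_comb_recr n (l : 'I_n.+1 -> R) (x : 'I_n.+1 -> V) :
  (forall i, 0 <= l i) -> \sum_i l i = 1 -> l ord_max != 1 ->
  let l' i := l (widen_ord (leqnSn n) i) / (1 - l ord_max) in
  [/\ forall i, 0 <= l' i, \sum_i l' i = 1 &
      \sum_i l i *: x i = l ord_max *: x ord_max +
        (1 - l ord_max) *: \sum_i l' i *: x (widen_ord (leqnSn n) i)].
Proof.
move=> l0 l1 lm1 l'; have lm_le1 := convex_weight_le1 ord_max l0 l1.
have s_neq0 : 1 - l ord_max != 0 by rewrite subr_eq0 eq_sym.
have rest : \sum_(i < n) l (widen_ord (leqnSn n) i) = 1 - l ord_max.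
  by move: l1; rewrite big_ord_recr /= => <-; rewrite addrK.
split.
- by move=> i; apply: divr_ge0 => //; rewrite subr_ge0.
- by rewrite -mulr_suml rest mulfV.
rewrite big_ord_recr /= addrC scaler_sumr; congr (_ + _); apply: eq_bigr => i _.
by rewrite scalerA mulrCA mulfV ?mulr1.
Qed.

Lemma convex_comb_mem C : convex_set C ->
  forall n (l : 'I_n -> R) (x : 'I_n -> V),
  (forall i, C (x i)) -> (forall i, 0 <= l i) -> \sum_i l i = 1 ->
  C (\sum_i l i *: x i).
Proof.
move=> cC; elim=> [|n IH] l x Cx l0 l1.
  by move: l1; rewrite big_ord0 => /eqP; rewrite eq_sym oner_eq0.
have [lm1|lm1] := eqVneq (l ord_max) 1; first by rewrite convex_comb_max.
have [l'0 l'1 ->] := convex_comb_recr x l0 l1 lm1.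
apply: cC; [exact: Cx | exact: IH | exact: l0 | exact: convex_weight_le1].
Qed.

Lemma ext_convex_comb C : convex_set C ->
  forall z, ext C z -> forall n (l : 'I_n -> R) (x : 'I_n -> V),
  (forall i, C (x i)) -> (forall i, 0 <= l i) -> \sum_i l i = 1 ->
  z = \sum_i l i *: x i -> exists i, x i = z.
Proof.
move=> cC z [Cz z_ext]; elim=> [|n IH] l x Cx l0 l1 ez.
  by move: l1; rewrite big_ord0 => /eqP; rewrite eq_sym oner_eq0.
have [lm1|lm1] := eqVneq (l ord_max) 1.
  by exists ord_max; rewrite ez convex_comb_max.
have [l'0 l'1 ez'] := convex_comb_recr x l0 l1 lm1; rewrite {}ez' in ez.
have [lm0|lm0] := eqVneq (l ord_max) 0.
  set S := \sum_(i < n) _ in ez.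
  move: ez; rewrite lm0 scale0r add0r subr0 scale1r => ez.
  have [i <-] := IH _ _ (fun i => Cx _) l'0 l'1 ez.
  by exists (widen_ord (leqnSn n) i).
have lm_gt0 : 0 < l ord_max by rewrite lt_def lm0 l0.
have lm_lt1 : l ord_max < 1.
  by rewrite lt_def eq_sym lm1 (convex_weight_le1 ord_max l0 l1).
have C_rest : C (\sum_i (l (widen_ord (leqnSn n) i) / (1 - l ord_max)) *:
                     x (widen_ord (leqnSn n) i)).
  exact: convex_comb_mem.
by exists ord_max; case: (z_ext _ _ _ (Cx _) C_rest lm_gt0 lm_lt1 ez).
Qed.

End ConvexCombination.

Section Caratheodory.
Variables (R : realType) (X : vectType R).

Lemma exists_linear_dependence m : (\dim {:X} < m)%N -> forall v : 'I_m -> X,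
  exists c : 'I_m -> R, \sum_i c i *: v i = 0 /\ exists i, c i != 0.
Proof.
move=> dim_lt v; pose T := [tuple v i | i < m].
have T_notfree : ~~ free T.
  apply/negP; rewrite /free size_tuple => /eqP dimT.
  by have := dimvS (subvf <<T>>%VS); rewrite dimT leqNgt dim_lt.
apply: contrapT => no_dep; move: T_notfree; apply/negP/negPn/freeP => c c_eq0 i.
apply/eqP; apply: contrapT => ci_neq0; apply: no_dep; exists c.
split; last by exists i; apply/negP.
by rewrite -[RHS]c_eq0; apply: eq_bigr => j _; rewrite -tnth_nth tnth_mktuple.
Qed.

Lemma exists_affine_dependence m : (\dim {:X} < m)%N -> forall k : 'I_m.+1 -> X,
  exists mu : 'I_m.+1 -> R,
    [/\ \sum_i mu i = 0, \sum_i mu i *: k i = 0 & exists i, 0 < mu i].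
Proof.
move=> dim_lt k.
have [c [c_dep [i0 ci0]]] :=
  exists_linear_dependence dim_lt (fun j => k (lift ord0 j) - k ord0).
pose mu i := if unlift ord0 i is Some j then c j else - \sum_j c j.
have mu_lift j : mu (lift ord0 j) = c j by rewrite /mu liftK.
have mu0 : mu ord0 = - \sum_j c j by rewrite /mu unlift_none.
have mu_sum : \sum_i mu i = 0.
  by rewrite big_ord_recl mu0 (eq_bigr _ (fun j _ => mu_lift j)) addNr.
exists mu; split => //.
  rewrite big_ord_recl mu0 (eq_bigr _ (fun j _ => congr1 (fun a => a *: _) (mu_lift j))).
  rewrite -[RHS]c_dep; under [RHS]eq_bigr do rewrite scalerBr.
  by rewrite sumrB scaleNr scaler_suml addrC.
apply: contrapT => no_pos.
have mu_le0 i : mu i <= 0 by rewrite leNgt; apply/negP => mu_gt0; apply: no_pos; exists i.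
have /eqP : \sum_i - mu i = 0 by rewrite sumrN mu_sum oppr0.
rewrite psumr_eq0 => [/allP /(_ (lift ord0 i0) (mem_index_enum _))|i _].
  by rewrite oppr_eq0 mu_lift (negbTE ci0).
by rewrite oppr_ge0.
Qed.

Lemma caratheodory_step m : (\dim {:X} < m)%N ->
  forall (l : 'I_m.+1 -> R) (k : 'I_m.+1 -> X),
  (forall i, 0 <= l i) -> \sum_i l i = 1 ->
  exists (l' : 'I_m -> R) (k' : 'I_m -> X),
  [/\ forall j, exists i, k' j = k i, forall j, 0 <= l' j, \sum_j l' j = 1 &
      \sum_j l' j *: k' j = \sum_i l i *: k i].
Proof.
move=> dim_lt l k l0 l1.
have [mu [mu_sum mu_k [i0 mu_i0]]] := exists_affine_dependence dim_lt k.
have [j mu_j j_min] := @arg_minP _ _ _ i0 (fun i => 0 < mu i) (fun i => l i / mu i) mu_i0.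
pose t := l j / mu j; pose l2 i := l i - t * mu i.
have l2_ge0 i : 0 <= l2 i.
  rewrite subr_ge0; have [mu_i|] := ltrP 0 (mu i).
    by rewrite -ler_pdivlMr //; apply: j_min.
  move=> mu_le0; apply: le_trans (l0 i).
  by apply: mulr_ge0_le0 => //; apply: divr_ge0 => //; apply: ltW.
have l2_j : l2 j = 0 by rewrite /l2 /t divfK ?subrr // gt_eqF.
have l2_sum : \sum_i l2 i = 1 by rewrite sumrB -mulr_sumr mu_sum mulr0 subr0.
have l2_comb : \sum_i l2 i *: k i = \sum_i l i *: k i.
  under eq_bigr do rewrite scalerBl -scalerA.
  by rewrite sumrB -scaler_sumr mu_k scaler0 subr0.
exists (fun i => l2 (lift j i)), (fun i => k (lift j i)); split => //.
- by move=> i; exists (lift j i).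
- by move: l2_sum; rewrite (bigD1_ord j) //= l2_j add0r.
- by rewrite -l2_comb (bigD1_ord j) //= l2_j scale0r add0r.
Qed.

End Caratheodory.

Definition convn (R : realType) (V : lmodType R) (K : set V) m : set V :=
  [set p | exists (l : 'I_m -> R) (k : 'I_m -> V),
     [/\ forall i, K (k i), forall i, 0 <= l i, \sum_i l i = 1 &
         p = \sum_i l i *: k i]].

Lemma convn_segment (R : realType) (X : vectType R) (K : set X) m p k0 t :
  (\dim {:X} < m)%N -> convn K m p -> K k0 -> 0 <= t -> t <= 1 ->
  convn K m ((1 - t) *: p + t *: k0).
Proof.
move=> dim_lt [l [k [Kk l0 l1 ->]]] Kk0 t0 t1.
pose l' (i : 'I_m.+1) := if unlift ord_max i is Some j then (1 - t) * l j else t.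
pose k' (i : 'I_m.+1) := if unlift ord_max i is Some j then k j else k0.
have l'_max : l' ord_max = t by rewrite /l' unlift_none.
have k'_max : k' ord_max = k0 by rewrite /k' unlift_none.
have l'_lift j : l' (lift ord_max j) = (1 - t) * l j by rewrite /l' liftK.
have k'_lift j : k' (lift ord_max j) = k j by rewrite /k' liftK.
have l'0 i : 0 <= l' i.
  case: (unliftP ord_max i) => [j ->|->]; rewrite ?l'_lift ?l'_max //.
  by rewrite mulr_ge0 // subr_ge0.
have l'1 : \sum_i l' i = 1.
  rewrite (bigD1_ord ord_max) //= l'_max (eq_bigr _ (fun j _ => l'_lift j)).
  by rewrite -mulr_sumr l1 mulr1 addrC subrK.
have [l2 [k2 [k2_k l2_0 l2_1 comb2]]] := caratheodory_step dim_lt k' l'0 l'1.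
exists l2, k2; split; rewrite ?comb2 //.
  move=> j; have [i ->] := k2_k j.
  by case: (unliftP ord_max i) => [j' ->|->]; rewrite ?k'_lift ?k'_max.
rewrite (bigD1_ord ord_max) //= l'_max k'_max addrC scaler_sumr; congr (_ + _).
by apply: eq_bigr => j _; rewrite l'_lift k'_lift scalerA.
Qed.

Lemma le0_of_le_mulr (R : realFieldType) (a b : R) :
  0 <= b -> (forall t, 0 < t -> t <= 1 -> a <= t * b) -> a <= 0.
Proof.
move=> b0 le_ab; rewrite leNgt; apply/negP => a_gt0.
have ab_gt0 : 0 < a + b by lra.
have t_le1 : a / (a + b) <= 1 by rewrite ler_pdivrMr // mul1r; lra.
have := le_ab _ (divr_gt0 a_gt0 ab_gt0) t_le1.
by rewrite mulrAC ler_pdivlMr //; nra.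
Qed.

Section NearestPoint.
Variables (R : realType) (X : vectType R) (ip : X -> X -> R).
Hypothesis hip : is_inner_product ip.

Lemma convn_nearest_eq (K : set X) m y p : (\dim {:X} < m)%N -> convn K m p ->
  (forall q, convn K m q -> ip (y - p) (y - p) <= ip (y - q) (y - q)) ->
  (forall w, exists2 k, K k & ip y w <= ip k w) -> y = p.
Proof.
move=> dim_lt Kp p_min y_supp.
have obtuse k : K k -> ip (k - p) (y - p) <= 0.
  move=> Kk; suff : 2 * ip (k - p) (y - p) <= 0 by lra.
  apply: (le0_of_le_mulr (ip_ge0 hip (k - p))) => t t0 t1.
  have := p_min _ (convn_segment dim_lt Kp Kk (ltW t0) t1).
  have -> : y - ((1 - t) *: p + t *: k) = (y - p) - t *: (k - p).
    by rewrite scalerBl scale1r scalerBr !opprD !opprK !addrA addrAC.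
  rewrite (ip_subsq hip (y - p)) (ipZr hip) (ipZl hip) (ipZr hip) (ipC hip (y - p)).
  by move=> le_t; rewrite -(ler_pM2l t0); nra.
have [k Kk le_yk] := y_supp (y - p).
apply: (ip_subsq_le0 hip); rewrite -(ip_subsq hip).
by have := obtuse k Kk; rewrite !(ipBl hip); lra.
Qed.

End NearestPoint.

Import numFieldNormedType.Exports.
Import VectorInternalTheory.

Section RowVectors.
Variable R : realType.

Lemma bounded_set_le (V : normedModType R) (A : set V) (M : R) :
  (forall v, A v -> `|v| <= M) -> bounded_set A.
Proof.
move=> le_M; rewrite /bounded_set /bounded_near; near=> M' => v Av /=.
apply: le_trans (le_M _ Av) _; near: M'; apply: nbhs_pinfty_ge; exact: num_real.
Unshelve. all: end_near. Qed.

Lemma row_coord_le_norm n (u : 'rV[R]_n) j : `|u 0 j| <= `|u|.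
Proof.
rewrite [leRHS]/Num.Def.normr /= mx_normrE; apply/bigmax_geP; right => /=.
by exists (0, j).
Qed.

Lemma row_norm_le n (u : 'rV[R]_n) B : 0 <= B -> (forall j, `|u 0 j| <= B) -> `|u| <= B.
Proof.
move=> B0 le_B; rewrite [leLHS]/Num.Def.normr /= mx_normrE.
by apply/bigmax_leP; split => // -[i j] _ /=; rewrite (ord1 i).
Qed.

Lemma continuous_row (T : topologicalType) n (f : T -> 'rV[R]_n) :
  (forall j, continuous (fun t => f t 0 j)) -> continuous f.
Proof.
move=> f_cont t; apply/cvgrPdist_lt => e e0.
have : \forall s \near t, forall j, `|f t 0 j - f s 0 j| < e.
  by apply: filter_forall => j; apply: (proj1 (cvgrPdist_lt _ _) (f_cont j t)).
apply: filterS => s lt_e; rewrite [ltLHS]/Num.Def.normr /= mx_normrE.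
by apply: bigmax_lt => // -[i j] _ /=; rewrite (ord1 i) !mxE.
Qed.

Lemma sqr_norm_le_quadratic n (Q : 'rV[R]_n -> R) :
  continuous Q -> (forall a u, Q (a *: u) = a ^+ 2 * Q u) ->
  (forall u, u != 0 -> 0 < Q u) -> exists C, forall u, `|u| ^+ 2 <= C * Q u.
Proof.
move=> Q_cont QZ Q_gt0; pose S := [set u : 'rV[R]_n | `|u| = 1].
have Q0 : Q 0 = 0 by rewrite -(scale0r 0) QZ expr0n mul0r.
have normalize (u : 'rV[R]_n) : u != 0 -> S (`|u|^-1 *: u).
  by move=> u0; apply: normrZV; rewrite unitfE normr_eq0.
have [[c Sc]|S0] := pselect (S !=set0); last first.
  exists 0 => u; rewrite mul0r; have [->|u0] := eqVneq u 0.
    by rewrite normr0 expr0n.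
  by case: S0; exists (`|u|^-1 *: u); apply: normalize.
have S_compact : compact S.
  apply: bounded_closed_compact; first by apply: (@bounded_set_le _ _ 1) => v ->.
  exact: (preimage_closed (fun x _ => @norm_continuous _ _ x) (@closed_eq _ 1)).
have [d Sd d_min] := EVT_min_rV (ex_intro _ c Sc) S_compact (continuous_subspaceT Q_cont).
have d_gt0 : 0 < Q d.
  apply: Q_gt0; apply/eqP => d0; move: Sd; rewrite inE /S /= d0 normr0.
  by move/eqP; rewrite eq_sym oner_eq0.
exists (Q d)^-1 => u; have [->|u0] := eqVneq u 0; first by rewrite Q0 normr0 expr0n mulr0.
have -> : Q u = `|u| ^+ 2 * Q (`|u|^-1 *: u).
  by rewrite QZ mulrA -exprMn mulfV ?normr_eq0 // expr1n mul1r.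
rewrite mulrCA ler_peMr ?exprn_ge0 // ler_pdivlMl // mulr1.
by apply: d_min; rewrite inE; apply: normalize.
Qed.

End RowVectors.

Section CoordinateContinuity.
Variables (R : realType) (X : vectType R) (ip : X -> X -> R).
Hypothesis hip : is_inner_product ip.

Lemma continuous_ip_sumr (T : topologicalType) (I : finType) (a : I -> T -> R)
    (e : I -> X) w :
  (forall i, continuous (a i)) -> continuous (fun t => ip w (\sum_i a i t *: e i)).
Proof.
move=> a_cont; under eq_fun do rewrite (ip_sumr hip).
apply: continuous_big => [|i _]; first exact: add_continuous.
under eq_fun do rewrite (ipZr hip).
by move=> t; apply: continuousM; [exact: a_cont | exact: cst_continuous].
Qed.

Lemma continuous_ip_sum (T : topologicalType) (I : finType) (a : I -> T -> R)
    (e : I -> X) :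
  (forall i, continuous (a i)) ->
  continuous (fun t => ip (\sum_i a i t *: e i) (\sum_i a i t *: e i)).
Proof.
move=> a_cont; under eq_fun do rewrite (ip_suml hip).
apply: continuous_big => [|i _]; first exact: add_continuous.
under eq_fun do rewrite (ipZl hip).
by move=> t; apply: continuousM; [exact: a_cont | exact: continuous_ip_sumr].
Qed.

Lemma continuous_ip_subsq (T : topologicalType) (I : finType) (a : I -> T -> R)
    (e : I -> X) y :
  (forall i, continuous (a i)) ->
  continuous (fun t => ip (y - \sum_i a i t *: e i) (y - \sum_i a i t *: e i)).
Proof.
have expand_cont (f g : T -> R) : continuous f -> continuous g ->
    continuous (fun t => ip y y - 2 * f t + g t).
  move=> f_cont g_cont t; apply: (continuousD _ (g_cont t)).
  apply: continuousB; first exact: cst_continuous.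
  by apply: continuousM (f_cont t); exact: cst_continuous.
move=> a_cont; under eq_fun do rewrite (ip_subsq hip).
by apply: expand_cont; [exact: continuous_ip_sumr | exact: continuous_ip_sum].
Qed.

Definition coord_basis (j : 'I_(dim X)) : X := r2v (delta_mx 0 j).

Lemma r2v_coord (u : 'rV[R]_(dim X)) : r2v u = \sum_j u 0 j *: coord_basis j.
Proof.
by rewrite {1}(row_sum_delta u) linear_sum; apply: eq_bigr => j _; rewrite linearZ.
Qed.

Lemma compact_sphere_cap (r : R) (h : X -> R) :
  compact (r2v @^-1` [set z | ip z z = r /\ forall w, ip z w <= h w]).
Proof.
pose Q u := ip (r2v u) (r2v u).
have Q_cont : continuous Q.
  rewrite /Q; under eq_fun do rewrite r2v_coord.
  by apply: continuous_ip_sum => j; apply: coord_continuous.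
have [C le_C] : exists C, forall u, `|u| ^+ 2 <= C * Q u.
  apply: sqr_norm_le_quadratic => // [a u|u u0].
    by rewrite /Q linearZ (ipZl hip) (ipZr hip) mulrA expr2.
  rewrite lt_def ip_ge0 // andbT; apply: contra u0 => /eqP /(ip_eq0 hip) u0.
  by rewrite -(r2vK u) u0 linear0.
apply: bounded_closed_compact.
  apply: (@bounded_set_le _ _ _ (1 + C * r)) => u [Qu _].
  by have := le_C u; rewrite /Q Qu; nra.
have -> : r2v @^-1` [set z | ip z z = r /\ forall w, ip z w <= h w] =
    Q @^-1` [set r] `&` \bigcap_w (fun u => ip (r2v u) w) @^-1` [set x | x <= h w].
  apply/seteqP; split => u [Qu le_h]; split => // w; first by move=> _; apply: le_h.
  exact: le_h.
apply: closedI; first exact: (preimage_closed (fun u _ => Q_cont u) (@closed_eq _ r)).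
apply: closed_bigI => w _; apply: (preimage_closed _ (@closed_le _ (h w))) => u _.
under eq_fun do rewrite (ipC hip) r2v_coord.
by apply: continuous_ip_sumr => j; apply: coord_continuous.
Qed.

End CoordinateContinuity.

Section NearestPointExistence.
Variables (R : realType) (X : vectType R) (ip : X -> X -> R).
Hypothesis hip : is_inner_product ip.
Variables (K : set X) (m : nat).
Hypotheses (K_compact : compact (r2v @^-1` K)) (K_neq0 : K !=set0).

Local Notation n := (dim X).
Local Notation N := (m.+1 * (1 + n))%N.

(* A point of ['rV_N] packs [m.+1] weights and the coordinates of [m.+1] points of [X]. *)
Let weight (v : 'rV[R]_N) i := v 0 (mxvec_index i (lshift n (ord0 : 'I_1))).
Let point (v : 'rV[R]_N) i : 'rV[R]_n := \row_j v 0 (mxvec_index i (rshift 1 j)).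
Let comb v := \sum_i weight v i *: r2v (point v i).

Let P : set 'rV[R]_N :=
  \bigcap_i [set v | 0 <= weight v i] `&` [set v | \sum_i weight v i = 1] `&`
  \bigcap_i [set v | K (r2v (point v i))].

Let P_closed : closed P.
Proof.
have weight_cont i : continuous (weight^~ i) by apply: coord_continuous.
apply: closedI; first apply: closedI.
- apply: closed_bigI => i _.
  exact: (preimage_closed (fun v _ => weight_cont i v) (@closed_ge _ 0)).
- apply: (preimage_closed _ (@closed_eq _ 1)) => v _.
  by apply: continuous_big => [|i _]; [exact: add_continuous | exact: weight_cont].
- apply: closed_bigI => i _.
  apply: (preimage_closed _ (compact_closed _ K_compact)) => // v _.
  apply: continuous_row => j; under eq_fun do rewrite mxE.
  exact: coord_continuous.
Qed.

Let P_bounded : bounded_set P.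
Proof.
have [M [_ le_M]] := compact_bounded K_compact.
have {}le_M u : K (r2v u) -> `|u| <= M + 1 by apply: le_M; rewrite ltrDl.
apply: (@bounded_set_le _ _ _ (Num.max 1 (M + 1))) => v [[w_ge0 w_sum] Kv].
apply: row_norm_le => [|k]; first by rewrite le_max ler01.
case: (mxvec_indexP k) => i j; rewrite -(splitK j); case: (split j) => [j1|j2] /=.
- rewrite (ord1 j1) -/(weight v i) ger0_norm ?w_ge0 // le_max.
  by rewrite (convex_weight_le1 _ (fun i => w_ge0 i I) w_sum).
- have := row_coord_le_norm (point v i) j2; rewrite mxE => le_pt.
  by rewrite le_max (le_trans le_pt (le_M _ (Kv i I))) orbT.
Qed.

Let P_convn v : P v -> convn K m.+1 (comb v).
Proof.
move=> [[w_ge0 w_sum] Kv]; exists (weight v), (r2v \o point v).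
by split => // i; [exact: Kv | exact: w_ge0].
Qed.

Let convn_P q : convn K m.+1 q -> exists2 v, P v & comb v = q.
Proof.
move=> [l [k [Kk l_ge0 l_sum ->]]].
pose v : 'rV[R]_N := mxvec (row_mx (\col_i l i) (\matrix_(i, j) v2r (k i) 0 j)).
have weight_v i : weight v i = l i by rewrite /weight mxvecE row_mxEl mxE.
have point_v i : r2v (point v i) = k i.
  rewrite -[RHS]v2rK; congr r2v; apply/rowP => j.
  by rewrite !mxE (mxvecE (row_mx _ _)) row_mxEr mxE.
exists v; last by apply: eq_bigr => i _; rewrite weight_v point_v.
split; first split.
- by move=> i _; rewrite /= weight_v.
- by rewrite /= -l_sum; apply: eq_bigr => i _.
- by move=> i _; rewrite /= point_v.
Qed.

Let comb_coord v : comb v = \sum_(p : 'I_m.+1 * 'I_n)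
    (weight v p.1 * v 0 (mxvec_index p.1 (rshift 1 p.2))) *: coord_basis p.2.
Proof.
rewrite -(pair_big xpredT xpredT
  (fun i j => (weight v i * v 0 (mxvec_index i (rshift 1 j))) *: coord_basis j)).
apply: eq_bigr => i _; rewrite r2v_coord scaler_sumr; apply: eq_bigr => j _.
by rewrite mxE scalerA.
Qed.

Lemma exists_nearest_convn y : exists2 p, convn K m.+1 p &
  forall q, convn K m.+1 q -> ip (y - p) (y - p) <= ip (y - q) (y - q).
Proof.
have F_cont : continuous (fun v => ip (y - comb v) (y - comb v)).
  under eq_fun do rewrite comb_coord.
  by apply: (continuous_ip_subsq hip) => p v; apply: continuousM; apply: coord_continuous.
have P_neq0 : P !=set0.
  have [k0 Kk0] := K_neq0; suff /convn_P [v Pv _] : convn K m.+1 k0 by exists v.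
  have w_sum : \sum_(i < m.+1) (i == ord0)%:R = 1 :> R.
    by rewrite big_ord_recl eqxx big1 ?addr0.
  exists (fun i => (i == ord0)%:R), (fun _ => k0).
  by split=> //; rewrite -scaler_suml w_sum scale1r.
have P_compact := bounded_closed_compact P_bounded P_closed.
have [c Pc c_min] := EVT_min_rV P_neq0 P_compact (continuous_subspaceT F_cont).
exists (comb c); first by apply: P_convn; rewrite -inE.
by move=> q /convn_P [v Pv <-]; apply: c_min; rewrite inE.
Qed.

End NearestPointExistence.

Lemma convex_comb_eq_ub (R : realFieldType) (t a b s : R) : 0 < t -> t < 1 ->
  a <= s -> b <= s -> s = t * a + (1 - t) * b -> a = s /\ b = s.
Proof.
move=> t_gt0 t_lt1 a_le b_le s_eq.
have ta : t * a <= t * s by rewrite ler_pM2l.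
have tb : (1 - t) * b <= (1 - t) * s by rewrite ler_pM2l // subr_gt0.
have ta_eq : t * a = t * s by lra.
have tb_eq : (1 - t) * b = (1 - t) * s by lra.
split; [apply: (mulfI (lt0r_neq0 t_gt0)) | apply: (mulfI _ tb_eq)] => //.
by rewrite subr_eq0 eq_sym lt_eqF.
Qed.

Section SpectralDecompositionSystem.
Variables (R : realType) (H X : vectType R) (ipH : H -> H -> R) (ipX : X -> X -> R).
Variables (G : Type) (mul : G -> G -> G) (one : G) (inv : G -> G) (act : G -> X -> X).
Variables (gamma : H -> X) (A : Type) (Lam : A -> X -> H) (tau : X -> X).
Hypotheses (hipH : is_inner_product ipH) (hipX : is_inner_product ipX).
Hypotheses (hG : is_group mul one inv) (hact : is_isometric_action mul one ipX act).
Hypotheses (Lam_lin : forall a, linear (Lam a))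
  (Lam_iso : forall a, is_isometry ipX ipH (Lam a)).
Hypotheses (tau_act : forall s x, tau (act s x) = tau x)
  (tau_orbit : forall x, exists s, tau x = act s x)
  (gamma_Lam : forall a x, gamma (Lam a x) = tau x).
Hypotheses (Lam_gamma : forall Y, exists a, Y = Lam a (gamma Y))
  (ip_le_gamma : forall Y Z, ipH Y Z <= ipX (gamma Y) (gamma Z)).

Lemma act_linear s : linear (act s). Proof. by case: hact. Qed.

Lemma act_ip s x y : ipX (act s x) (act s y) = ipX x y.
Proof. by case: hact => _ _ act_lin act_iso; apply: (isometry_ip hipX hipX). Qed.

Lemma act_invK s x : act (inv s) (act s x) = x.
Proof.
by case: hact => act1 actM _ _; case: hG => _ _ _ mulVs _; rewrite -actM mulVs act1.
Qed.

Lemma act_Kinv s x : act s (act (inv s) x) = x.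
Proof.
by case: hact => act1 actM _ _; case: hG => _ _ _ _ mulsV; rewrite -actM mulsV act1.
Qed.

Lemma Lam_ip a x y : ipH (Lam a x) (Lam a y) = ipX x y.
Proof. exact: (isometry_ip hipX hipH). Qed.

Lemma ip_le_tau x y : ipX x y <= ipX (tau x) (tau y).
Proof. by have [a _] := Lam_gamma 0; rewrite -(Lam_ip a) -!(gamma_Lam a). Qed.

Lemma ip_gamma Y : ipX (gamma Y) (gamma Y) = ipH Y Y.
Proof. by have [a {3 4}->] := Lam_gamma Y; rewrite Lam_ip. Qed.

Lemma ip_gamma_Lam Z w : exists a, ipX (gamma Z) w = ipH Z (Lam a w).
Proof. by have [a eZ] := Lam_gamma Z; exists a; rewrite -(Lam_ip a) -eZ. Qed.

Lemma ip_Lam_le_tau a Y w : ipH Y (Lam a w) <= ipX (gamma Y) (tau w).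
Proof. by rewrite -(gamma_Lam a). Qed.

Lemma invariant_gamma_Lam D a x :
  invariant_set act D -> D x -> D (gamma (Lam a x)).
Proof.
by move=> D_inv Dx; rewrite gamma_Lam; have [s ->] := tau_orbit x; apply: D_inv.
Qed.

Definition orbit_cap c : set X :=
  [set z | ipX z z = ipX c c /\ forall w, ipX z w <= ipX (tau c) (tau w)].

Lemma orbit_cap_self c : orbit_cap c c.
Proof. by split=> // w; apply: ip_le_tau. Qed.

Lemma orbit_cap_orbit c z : orbit_cap c z -> exists s, z = act s c.
Proof.
move=> [zz le_z]; have [s1 tau_c] := tau_orbit c; have [s2 tau_z] := tau_orbit z.
have tau_cz : tau c = tau z.
  have tau_cc : ipX (tau c) (tau c) = ipX c c by rewrite tau_c act_ip.
  have tau_zz : ipX (tau z) (tau z) = ipX c c by rewrite tau_z act_ip zz.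
  by apply: (ip_subsq_le0 hipX); have := le_z z; rewrite zz; lra.
have [_ actM _ _] := hact.
by exists (mul (inv s2) s1); rewrite actM -tau_c tau_cz tau_z act_invK.
Qed.

Lemma orbit_cap_sub D c : invariant_set act D -> D c -> orbit_cap c `<=` D.
Proof. by move=> D_inv Dc z /orbit_cap_orbit [s ->]; apply: D_inv. Qed.

Lemma orbit_cap_support c y : (forall w, ipX y w <= ipX c (tau w)) ->
  forall w, exists2 k, orbit_cap c k & ipX y w <= ipX k w.
Proof.
move=> le_y w; have [s tau_w] := tau_orbit w; exists (act (inv s) c).
  split=> [|w']; first by rewrite act_ip.
  by rewrite -(tau_act (inv s) c); apply: ip_le_tau.
by rewrite -(act_ip s (act (inv s) c)) act_Kinv -tau_w; apply: le_y.
Qed.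

Lemma convn_orbit_cap c y : (forall w, ipX y w <= ipX c (tau w)) ->
  convn (orbit_cap c) (\dim {:X}).+1 y.
Proof.
move=> le_y; have K_compact : compact (r2v @^-1` orbit_cap c).
  exact: compact_sphere_cap.
have [p Kp p_min] := exists_nearest_convn hipX (\dim {:X}) K_compact
  (ex_intro _ c (orbit_cap_self c)) y.
by rewrite (convn_nearest_eq hipX (ltnSn _) Kp p_min (orbit_cap_support le_y)).
Qed.

Lemma gamma_comb_le n (l : 'I_n -> R) (Y : 'I_n -> H) : (forall i, 0 <= l i) ->
  forall w, ipX (gamma (\sum_i l i *: Y i)) w <= ipX (\sum_i l i *: gamma (Y i)) (tau w).
Proof.
move=> l_ge0 w; have [a ->] := ip_gamma_Lam (\sum_i l i *: Y i) w.
rewrite (ip_suml hipH) (ip_suml hipX); apply: ler_sum => i _.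
by rewrite (ipZl hipH) (ipZl hipX) ler_wpM2l ?ip_Lam_le_tau.
Qed.

Lemma conv_preimage_gamma D : invariant_set act D ->
  conv (gamma @^-1` D) = gamma @^-1` (conv D).
Proof.
move=> D_inv; apply/seteqP; split => Z.
  move=> [n [l [Y [DY l_ge0 l_sum ->]]]] /=.
  have [mu [k [Kk mu_ge0 mu_sum ->]]] := convn_orbit_cap (gamma_comb_le Y l_ge0).
  apply: (convex_comb_mem (@conv_convex _ _ D)) => // j.
  have [s ->] := orbit_cap_orbit (Kk j).
  rewrite (lin_sum (act_linear s)); under eq_bigr do rewrite (linZ (act_linear s)).
  by apply: conv_fin => // i; apply: D_inv; apply: DY.
move=> [n [l [x [Dx l_ge0 l_sum gZ]]]]; have [a ->] := Lam_gamma Z.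
rewrite gZ (lin_sum (Lam_lin a)); under eq_bigr do rewrite (linZ (Lam_lin a)).
by apply: conv_fin => // i; apply: invariant_gamma_Lam.
Qed.

Lemma ext_preimage_sub D : invariant_set act D ->
  ext (gamma @^-1` D) `<=` gamma @^-1` (ext D).
Proof.
move=> D_inv Z [DgZ Z_ext]; split => // y z t Dy Dz t_gt0 t_lt1 gZ.
have [a eZ] := Lam_gamma Z.
have Z_comb : Z = t *: Lam a y + (1 - t) *: Lam a z.
  by rewrite {1}eZ gZ (linD (Lam_lin a)) !(linZ (Lam_lin a)).
have [Ly Lz] := Z_ext _ _ _ (invariant_gamma_Lam a D_inv Dy)
  (invariant_gamma_Lam a D_inv Dz) t_gt0 t_lt1 Z_comb.
by split; apply: (isometry_inj hipX hipH (Lam_lin a) (Lam_iso a)); rewrite -eZ.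
Qed.

Lemma preimage_ext_sub D : invariant_set act D -> convex_set D ->
  gamma @^-1` (ext D) `<=` ext (gamma @^-1` D).
Proof.
move=> D_inv D_convex Z [DgZ gZ_ext]; split => // Y W t DY DW t_gt0 t_lt1 Z_comb.
set c := t *: gamma Y + (1 - t) *: gamma W.
have t'_gt0 : 0 < 1 - t by rewrite subr_gt0.
have gZ_le w : ipX (gamma Z) w <= ipX c (tau w).
  have [a ->] := ip_gamma_Lam Z w.
  rewrite Z_comb (ipDl hipH) !(ipZl hipH) (ipDl hipX) !(ipZl hipX).
  by apply: lerD; rewrite ler_pM2l ?ip_Lam_le_tau.
have Dc : D c by apply: D_convex => //; apply: ltW.
have [mu [k [Kk mu_ge0 mu_sum gZ_comb]]] := convn_orbit_cap gZ_le.
have [j kj] := ext_convex_comb D_convex (conj DgZ gZ_ext)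
  (fun j => orbit_cap_sub D_inv Dc (Kk j)) mu_ge0 mu_sum gZ_comb.
have gZ_norm : ipX (gamma Z) (gamma Z) = ipX c c by rewrite -kj; case: (Kk j).
have ZZ : ipH Z Z = t * ipH Y Z + (1 - t) * ipH W Z.
  by rewrite {1}Z_comb (ipDl hipH) !(ipZl hipH).
have c_eq : c = gamma Z.
  have cZ : ipX c (gamma Z) =
      t * ipX (gamma Y) (gamma Z) + (1 - t) * ipX (gamma W) (gamma Z).
    by rewrite (ipDl hipX) !(ipZl hipX).
  have YZ : t * ipH Y Z <= t * ipX (gamma Y) (gamma Z) by rewrite ler_pM2l.
  have WZ : (1 - t) * ipH W Z <= (1 - t) * ipX (gamma W) (gamma Z).
    by rewrite ler_pM2l.
  by apply: (ip_subsq_le0 hipX); rewrite -gZ_norm ip_gamma; lra.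
have [gY gW] := gZ_ext _ _ _ DY DW t_gt0 t_lt1 (esym c_eq).
have [YZ_eq WZ_eq] : ipH Y Z = ipH Z Z /\ ipH W Z = ipH Z Z.
  apply: convex_comb_eq_ub ZZ => //.
    by apply: le_trans (ip_le_gamma Y Z) _; rewrite gY ip_gamma.
  by apply: le_trans (ip_le_gamma W Z) _; rewrite gW ip_gamma.
split; apply: (ip_subsq_le0 hipH).
  by rewrite -ip_gamma gY ip_gamma YZ_eq; lra.
by rewrite -ip_gamma gW ip_gamma WZ_eq; lra.
Qed.

Lemma ext_preimage_gamma D : invariant_set act D -> convex_set D ->
  ext (gamma @^-1` D) = gamma @^-1` (ext D).
Proof.
move=> D_inv D_convex; apply/seteqP; split; first exact: ext_preimage_sub.
exact: preimage_ext_sub.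
Qed.

End SpectralDecompositionSystem.

Theorem proposition4p9 (R : realType)
  (H : vectType R) (ipH : H -> H -> R) (X : vectType R) (ipX : X -> X -> R)
  (G : Type) (mul : G -> G -> G) (one : G) (inv : G -> G) (act : G -> X -> X)
  (gamma : H -> X) (A : Type) (Lam : A -> X -> H)
  (hipH : is_inner_product ipH) (hipX : is_inner_product ipX)
  (hG : is_group mul one inv) (hact : is_isometric_action mul one ipX act)
  (hLam : forall a, linear (Lam a))
  (hSDS : spectral_decomposition_system ipH ipX act gamma Lam)
  (D : set X) (hD0 : D !=set0) (hDinv : invariant_set act D) :
  conv (gamma @^-1` D) = gamma @^-1` (conv D) /\
  (convex_set D -> ext (gamma @^-1` D) = gamma @^-1` (ext D)).
Proof.
case: hSDS => Lam_iso [tau [tau_act tau_orbit gamma_Lam]] Lam_gamma ip_le_gamma.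
split; first exact: (conv_preimage_gamma hipH hipX hG hact hLam Lam_iso
  tau_act tau_orbit gamma_Lam Lam_gamma ip_le_gamma hDinv).
exact: (ext_preimage_gamma hipH hipX hG hact hLam Lam_iso
  tau_act tau_orbit gamma_Lam Lam_gamma ip_le_gamma hDinv).
Qed.
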